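(* For every $r\ge2$ there exists $\tilde k\in\mathbb{N}$ such that for every commutative ring $R$, all columns $b^+=(b_1,\ldots,b_r)^t\in R^r$ and $b^-=(b_{-r},\ldots,b_{-1})^t\in R^r$ with $\sum_{i=1}^rb_ib_{-i}=0$, and every $s\in\langle b_1,\ldots,b_r\rangle\trianglelefteq R$, there exists $M\in\Theta(r,R)$ such that $s^{\tilde k}b^-=Mb^+$.
   Context: For an $r\times r$ matrix $g$ with rows and columns indexed $1,\ldots,r$, its antidiagonal transpose $g^{\tau}$ has entries $(g^\tau)_{i,j}=g_{r+1-j,r+1-i}$. $\Theta(r,R)$ is the set of $r\times r$ matrices $M$ over $R$ with $M^{\tau}=-M$ and all antidiagonal entries $M_{i,r+1-i}$ equal to zero. *)

From mathcomp Require Import all_boot all_algebra.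
Set Implicit Arguments. Unset Strict Implicit. Unset Printing Implicit Defensive.
Import GRing.Theory.
Local Open Scope ring_scope.

(* Indices 1..r are represented by 'I_r = {0..r-1}; the index r+1-i
   corresponds to rev_ord i. *)

Definition antidiag_tr (R : Type) (r : nat) (g : 'M[R]_r) : 'M[R]_r :=
  \matrix_(i < r, j < r) g (rev_ord j) (rev_ord i).

Definition Theta (R : pzRingType) (r : nat) (M : 'M[R]_r) : Prop :=
  antidiag_tr M = - M /\ (forall i : 'I_r, M i (rev_ord i) = 0).

From mathcomp Require Import all_boot all_algebra.
Import GRing.Theory.
Local Open Scope ring_scope.

(* Write s = c b^+ for a row c. The rank-one matrix N = b^- c satisfies
   N b^+ = s b^-, whereas N^tau b^+ is a multiple of sum_i b_i b_{-i} = 0.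
   Since N - N^tau lies in Theta for every square N, M = N - N^tau works
   with exponent 1, for every r. *)

Lemma antidiag_trK (R : Type) (r : nat) : involutive (@antidiag_tr R r).
Proof. by move=> g; apply/matrixP => i j; rewrite !mxE !rev_ordK. Qed.

Lemma antidiag_trB (R : pzRingType) (r : nat) (g h : 'M[R]_r) :
  antidiag_tr (g - h) = antidiag_tr g - antidiag_tr h.
Proof. by apply/matrixP => i j; rewrite !mxE. Qed.

Lemma Theta_subr_antidiag_tr (R : pzRingType) (r : nat) (N : 'M[R]_r) :
  Theta (N - antidiag_tr N).
Proof.
split; first by rewrite antidiag_trB antidiag_trK opprB.
by move=> i; rewrite !mxE rev_ordK subrr.
Qed.

Lemma antidiag_tr_mul_col_row (R : comPzRingType) (r : nat)
    (u w : 'cV[R]_r) (v : 'rV[R]_r) :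
  antidiag_tr (u *m v) *m w =
    (\sum_(j < r) w j 0 * u (rev_ord j) 0) *: \col_i v 0 (rev_ord i).
Proof.
apply/matrixP => i k; rewrite ord1 !mxE mulr_suml.
apply: eq_bigr => j _; rewrite !mxE big_ord1.
by rewrite mulrC mulrA.
Qed.

Lemma mul_col_row_col (R : comPzRingType) (r : nat)
    (u w : 'cV[R]_r) (v : 'rV[R]_r) :
  u *m v *m w = (v *m w) 0 0 *: u.
Proof. by rewrite -mulmxA {1}(mx11_scalar (v *m w)) mul_mx_scalar. Qed.

Theorem lemma10 : forall r : nat, (2 <= r)%N ->
  exists kt : nat,
    forall (R : comPzRingType) (bp bm : 'cV[R]_r),
      \sum_(i < r) bp i 0 * bm (rev_ord i) 0 = 0 ->
      forall s : R, (exists c : 'I_r -> R, s = \sum_(i < r) c i * bp i 0) ->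
      exists M : 'M[R]_r, Theta M /\ s ^+ kt *: bm = M *m bp.
Proof.
move=> r _; exists 1%N => R bp bm bpm0 s [c ->].
pose N := bm *m \row_i c i.
exists (N - antidiag_tr N); split; first exact: Theta_subr_antidiag_tr.
rewrite mulmxBl antidiag_tr_mul_col_row bpm0 scale0r subr0.
rewrite mul_col_row_col expr1 mxE.
by congr (_ *: _); apply: eq_bigr => i _; rewrite mxE.
Qed.
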